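(* Let $q_1$ be piecewise continuous on $I=[a,b]$ and let $u$ be a solution of $u''+q_1(t)u=0$ with $u(a)=u(b)=0$, $a,b$ consecutive zeros of $u$. Then for every $\eta\in(0,b-a)$ there exist a piecewise continuous function $q_2$ on $I$ and a subinterval $J\subset I$ of length at most $\eta$ such that the inequality $q_1(t)\le q_2(t)$ is satisfied only for $t\in J$, and Sturm's comparison theorem holds on $I$, i.e. every solution $v$ of $v''+q_2(t)v=0$ has at least one zero in $I$.
   Context: ''Solution'' always means a nontrivial (not identically zero) solution. *)

From Stdlib Require Import Reals List.
From Coquelicot Require Import Coquelicot.
Open Scope R_scope.

Definition in_I (a b t : R) : Prop := a <= t <= b.

Definition piecewise_continuous (f : R -> R) (a b : R) : Prop :=
  exists (n : nat) (x : nat -> R),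
    x 0%nat = a /\ x n = b /\
    (forall i, (i < n)%nat -> x i < x (S i)) /\
    (forall i, (i < n)%nat ->
       (forall t, x i < t < x (S i) -> continuous f t) /\
       (exists l, filterlim f (at_right (x i)) (locally l)) /\
       (exists l, filterlim f (at_left (x (S i))) (locally l))).

Definition cont_on_I (v : R -> R) (a b t : R) : Prop :=
  filterlim v (within (in_I a b) (locally t)) (locally (v t)).

(* v is a (Caratheodory/classical) solution of v'' + q v = 0 on [a,b]:
   v is C^1 on [a,b] (differentiable on (a,b), with v and v' continuous
   on [a,b]) and v'' = - q v holds at every point of (a,b) except
   finitely many (the break points of the piecewise continuous q). *)
Definition is_solution_on (q : R -> R) (a b : R) (v : R -> R) : Prop :=
  exists v' : R -> R,
    (forall t, a < t < b -> is_derive v t (v' t)) /\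
    (forall t, in_I a b t -> cont_on_I v a b t /\ cont_on_I v' a b t) /\
    (exists E : list R, forall t, a < t < b -> ~ In t E ->
        is_derive v' t (- q t * v t)).

Definition nontrivial_on (a b : R) (v : R -> R) : Prop :=
  exists t, in_I a b t /\ v t <> 0.

Definition solution (q : R -> R) (a b : R) (v : R -> R) : Prop :=
  is_solution_on q a b v /\ nontrivial_on a b v.

From Stdlib Require Import Reals List.
From Coquelicot Require Import Coquelicot.
From Stdlib Require Import Lra Lia Ranalysis5.
Open Scope R_scope.

(* Idea: only a lower bound m of q1 matters.  Take q2 = m - 1 outside a
   middle interval [c, d] of length eta and q2 = (PI / eta)^2 on it.  Then
   q1 <= q2 only on [c, d], and on [c, d] the Wronskian of any solution v
   with sin (PI (t - c) / eta) is constant, which forces v d = - v c; so v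
   vanishes in [c, d] by the intermediate value theorem. *)

Lemma locally_open_interval x y t :
  x < t < y -> locally t (fun s => x < s < y).
Proof.
  intros Ht. apply (locally_interval _ t (Finite x) (Finite y)); simpl; auto; lra.
Qed.

Lemma continuous_of_cont_on_I g a b t :
  a < t < b -> cont_on_I g a b t -> continuous g t.
Proof.
  intros Ht Hg P HP. specialize (Hg P HP). unfold filtermap, within in *.
  apply (filter_imp (fun s => (in_I a b s -> P (g s)) /\ a < s < b)).
  - intros s [HPs Hs]. apply HPs. unfold in_I; lra.
  - apply filter_and; [exact Hg | now apply locally_open_interval].
Qed.

Definition bounded_below_on (f : R -> R) (P : R -> Prop) : Prop :=
  exists m, forall t, P t -> m <= f t.

Lemma bounded_below_on_union f P Q :
  bounded_below_on f P -> bounded_below_on f Q ->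
  bounded_below_on f (fun t => P t \/ Q t).
Proof.
  intros [m1 H1] [m2 H2]. exists (Rmin m1 m2).
  pose proof (Rmin_l m1 m2). pose proof (Rmin_r m1 m2).
  intros t [Ht|Ht]; [specialize (H1 t Ht) | specialize (H2 t Ht)]; lra.
Qed.

Lemma bounded_below_on_impl f P Q :
  (forall t, Q t -> P t) -> bounded_below_on f P -> bounded_below_on f Q.
Proof. intros HQP [m Hm]. exists m. auto. Qed.

Lemma bounded_below_on_point f x : bounded_below_on f (fun t => t = x).
Proof. exists (f x). intros t ->. lra. Qed.

Lemma bounded_below_on_segment f x y :
  (forall t, x <= t <= y -> continuous f t) ->
  bounded_below_on f (fun t => x <= t <= y).
Proof.
  intros Hf. destruct (Rle_dec x y) as [Hxy|Hxy].
  - destruct (continuity_ab_min f x y Hxy) as [t0 [Ht0 _]].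
    + intros t Ht. apply continuity_pt_filterlim, Hf, Ht.
    + exists (f t0). exact Ht0.
  - exists 0. intros t Ht. lra.
Qed.

Lemma bounded_below_at_right f x l :
  filterlim f (at_right x) (locally l) ->
  exists e, 0 < e /\ bounded_below_on f (fun t => x < t < x + e).
Proof.
  intros Hf.
  destruct (Hf _ (locally_open_interval (l - 1) (l + 1) l ltac:(lra))) as [e He].
  exists e. split; [apply cond_pos|]. exists (l - 1). intros t Ht.
  enough (l - 1 < f t < l + 1) by lra.
  apply He; [change (Rabs (t - x) < e); apply Rabs_def1|]; lra.
Qed.

Lemma bounded_below_at_left f y r :
  filterlim f (at_left y) (locally r) ->
  exists e, 0 < e /\ bounded_below_on f (fun t => y - e < t < y).
Proof.
  intros Hf.
  destruct (Hf _ (locally_open_interval (r - 1) (r + 1) r ltac:(lra))) as [e He].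
  exists e. split; [apply cond_pos|]. exists (r - 1). intros t Ht.
  enough (r - 1 < f t < r + 1) by lra.
  apply He; [change (Rabs (t - y) < e); apply Rabs_def1|]; lra.
Qed.

(* Near the ends the one-sided limits bound f, in between f is continuous on
   a compact segment. *)
Lemma bounded_below_on_piece f x y :
  x < y ->
  (forall t, x < t < y -> continuous f t) ->
  (exists l, filterlim f (at_right x) (locally l)) ->
  (exists r, filterlim f (at_left y) (locally r)) ->
  bounded_below_on f (fun t => x <= t <= y).
Proof.
  intros Hxy Hf [l Hl] [r Hr].
  destruct (bounded_below_at_right f x l Hl) as [e1 [He1 Hleft]].
  destruct (bounded_below_at_left f y r Hr) as [e2 [He2 Hright]].
  set (h := Rmin (Rmin e1 e2) (y - x) / 2).
  assert (Hh : 0 < h /\ h < e1 /\ h < e2 /\ 2 * h <= y - x).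
  { pose proof (Rmin_l (Rmin e1 e2) (y - x)). pose proof (Rmin_r (Rmin e1 e2) (y - x)).
    pose proof (Rmin_l e1 e2). pose proof (Rmin_r e1 e2).
    pose proof (Rmin_glb_lt (Rmin e1 e2) (y - x) 0 (Rmin_glb_lt e1 e2 0 He1 He2)).
    unfold h; lra. }
  assert (Hmid : bounded_below_on f (fun t => x + h <= t <= y - h)).
  { apply bounded_below_on_segment. intros t Ht. apply Hf. lra. }
  apply (bounded_below_on_impl f (fun t =>
    ((t = x \/ x < t < x + e1) \/ x + h <= t <= y - h) \/ (t = y \/ y - e2 < t < y))).
  - intros t Ht.
    destruct (Rle_dec t (y - h)); [left | right].
    + destruct (Rle_dec (x + h) t); [right; lra | left].
      destruct (Req_dec t x); [left | right]; lra.
    + destruct (Req_dec t y); [left | right]; lra.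
  - repeat apply bounded_below_on_union; auto using bounded_below_on_point.
Qed.

Lemma piecewise_continuous_bounded_below f a b :
  piecewise_continuous f a b -> bounded_below_on f (fun t => a <= t <= b).
Proof.
  intros [n [x [Hx0 [Hxn [Hinc Hpieces]]]]]. subst a b.
  enough (Hk : forall k, (k <= n)%nat ->
             bounded_below_on f (fun t => x 0%nat <= t <= x k)) by (apply Hk; lia).
  induction k as [|k IH]; intros Hk.
  - apply (bounded_below_on_impl f (fun t => t = x 0%nat)).
    + intros t Ht. lra.
    + apply bounded_below_on_point.
  - apply (bounded_below_on_impl f
      (fun t => x 0%nat <= t <= x k \/ x k <= t <= x (S k))).
    + intros t Ht. destruct (Rle_dec t (x k)); [left | right]; lra.
    + destruct (Hpieces k ltac:(lia)) as [Hc [Hl Hr]].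
      apply bounded_below_on_union; [apply IH; lia|].
      apply bounded_below_on_piece; auto with arith.
Qed.

Lemma const_of_derive_zero_except_finite (W : R -> R) (E : list R) x y :
  x <= y ->
  (forall t, x <= t <= y -> continuous W t) ->
  (forall t, x < t < y -> ~ In t E -> is_derive W t 0) ->
  W y = W x.
Proof.
  revert x y. induction E as [|e E IH]; intros x y Hxy Hc Hd.
  - destruct (MVT_gen W x y (fun _ => 0)) as [z [_ Hz]].
    + intros t Ht. rewrite Rmin_left, Rmax_right in Ht by lra. auto.
    + intros t Ht. rewrite Rmin_left, Rmax_right in Ht by lra.
      apply continuity_pt_filterlim, Hc, Ht.
    + cbv beta in Hz. lra.
  - assert (Hd' : forall x' y', x <= x' -> y' <= y -> (e <= x' \/ y' <= e) ->
                    forall t, x' < t < y' -> ~ In t E -> is_derive W t 0).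
    { intros x' y' Hx' Hy' He t Ht HtE. apply Hd; [lra|]. intros [Hte|Ht']; [lra | tauto]. }
    destruct (Rlt_dec x e) as [Hxe|Hxe]; [destruct (Rlt_dec e y) as [Hey|Hey]|].
    + transitivity (W e); apply IH; try lra;
        [ intros; apply Hc; lra | apply (Hd' e y) | intros; apply Hc; lra | apply (Hd' x e) ];
        lra.
    + apply IH; auto. apply (Hd' x y); lra.
    + apply IH; auto. apply (Hd' x y); lra.
Qed.

(* The Wronskian of v with the solution sin (w (s - c)) of y'' + w^2 y = 0. *)
Definition sin_wronskian (w c : R) (v v' : R -> R) (s : R) : R :=
  v' s * sin (w * (s - c)) - v s * (w * cos (w * (s - c))).

Lemma is_derive_sin_wronskian w c v v' t :
  is_derive v t (v' t) -> is_derive v' t (- (w * w) * v t) ->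
  is_derive (sin_wronskian w c v v') t 0.
Proof.
  intros Hv Hv'.
  assert (Hsin : is_derive (fun s => sin (w * (s - c))) t (w * cos (w * (t - c)))).
  { auto_derive; auto. unfold Rminus; ring. }
  assert (Hcos : is_derive (fun s => w * cos (w * (s - c))) t (- (w * w) * sin (w * (t - c)))).
  { auto_derive; auto. unfold Rminus; ring. }
  pose proof (is_derive_minus _ _ _ _ _
    (is_derive_mult _ _ _ _ _ Hv' Hsin Rmult_comm)
    (is_derive_mult _ _ _ _ _ Hv Hcos Rmult_comm)) as H.
  unfold sin_wronskian.
  match type of H with is_derive _ _ ?l => replace 0 with l; [exact H |] end.
  unfold minus, plus, mult, opp; simpl. ring.
Qed.

Lemma continuous_sin_wronskian w c v v' t :
  continuous v t -> continuous v' t -> continuous (sin_wronskian w c v v') t.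
Proof.
  intros Hv Hv'.
  assert (Hsin : continuous (fun s => sin (w * (s - c))) t).
  { apply (@ex_derive_continuous R_AbsRing R_NormedModule). auto_derive. auto. }
  assert (Hcos : continuous (fun s => w * cos (w * (s - c))) t).
  { apply (@ex_derive_continuous R_AbsRing R_NormedModule). auto_derive. auto. }
  apply (continuous_minus (fun s => v' s * sin (w * (s - c)))
                          (fun s => v s * (w * cos (w * (s - c))))).
  - now apply (continuous_mult v').
  - now apply (continuous_mult v).
Qed.

Lemma zero_of_sign_change f x y :
  x < y -> (forall t, x <= t <= y -> continuous f t) -> f x * f y <= 0 ->
  exists z, x <= z <= y /\ f z = 0.
Proof.
  intros Hxy Hf Hsign.
  assert (Hf' : forall t, x <= t <= y -> continuity_pt f t)
    by (intros t Ht; apply continuity_pt_filterlim, Hf, Ht).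
  destruct (Rtotal_order (f x) 0) as [Hx|[Hx|Hx]];
    [| exists x; split; [lra | exact Hx] |];
    (destruct (Req_dec (f y) 0) as [Hy|Hy]; [exists y; split; [lra | exact Hy]|]).
  - destruct (IVT_interv f x y Hf' Hxy Hx) as [z Hz]; [nra | now exists z].
  - destruct (IVT_interv (fun s => - f s) x y) as [z [Hz Hfz]]; [| exact Hxy | lra | nra |].
    + intros t Ht. apply continuity_pt_opp, Hf', Ht.
    + exists z. split; [exact Hz | lra].
Qed.

Lemma harmonic_solution_has_zero w c d v v' (E : list R) :
  c < d -> w * (d - c) = PI ->
  (forall t, c <= t <= d -> continuous v t /\ continuous v' t) ->
  (forall t, c < t < d -> is_derive v t (v' t)) ->
  (forall t, c < t < d -> ~ In t E -> is_derive v' t (- (w * w) * v t)) ->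
  exists z, c <= z <= d /\ v z = 0.
Proof.
  intros Hcd Hw Hcont Hv Hv'.
  assert (HW : sin_wronskian w c v v' d = sin_wronskian w c v v' c).
  { apply (const_of_derive_zero_except_finite _ E); [lra | |].
    - intros t Ht. apply continuous_sin_wronskian; apply Hcont, Ht.
    - intros t Ht HtE. apply is_derive_sin_wronskian; auto. }
  unfold sin_wronskian in HW. rewrite Hw, Rminus_diag, Rmult_0_r in HW.
  rewrite sin_0, cos_0, sin_PI, cos_PI in HW.
  assert (Hw0 : w <> 0) by (intros ->; pose proof PI_RGT_0; lra).
  assert (Hopp : v d = - v c) by (apply (Rmult_eq_reg_l w); [lra | exact Hw0]).
  apply zero_of_sign_change; [exact Hcd | intros t Ht; apply Hcont, Ht |].
  rewrite Hopp. nra.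
Qed.

Lemma is_solution_on_zero_of_harmonic_piece q a b c d w v :
  a < c -> c < d -> d < b -> w * (d - c) = PI ->
  (forall t, c <= t <= d -> q t = w * w) ->
  is_solution_on q a b v -> exists z, c <= z <= d /\ v z = 0.
Proof.
  intros Hac Hcd Hdb Hw Hq [v' [Hv [Hcont [E HE]]]].
  apply (harmonic_solution_has_zero w c d v v' E Hcd Hw).
  - intros t Ht. split.
    + apply (@ex_derive_continuous R_AbsRing R_NormedModule).
      exists (v' t). apply Hv. lra.
    + apply (continuous_of_cont_on_I v' a b); [lra |].
      apply Hcont. unfold in_I; lra.
  - intros t Ht. apply Hv. lra.
  - intros t Ht HtE. rewrite <- (Hq t) by lra. apply HE; [lra | exact HtE].
Qed.

Definition plateau (c d K m t : R) : R :=
  if Rle_dec c t then if Rle_dec t d then K else m else m.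

Lemma plateau_in c d K m t : c <= t <= d -> plateau c d K m t = K.
Proof.
  intros Ht. unfold plateau.
  destruct (Rle_dec c t); [destruct (Rle_dec t d)|]; lra.
Qed.

Lemma plateau_out c d K m t : ~ (c <= t <= d) -> plateau c d K m t = m.
Proof.
  intros Ht. unfold plateau.
  destruct (Rle_dec c t); [destruct (Rle_dec t d)|]; auto; lra.
Qed.

Lemma constant_piece (f : R -> R) x y k :
  x < y -> (forall s, x < s < y -> f s = k) ->
  (forall t, x < t < y -> continuous f t) /\
  (exists l, filterlim f (at_right x) (locally l)) /\
  (exists l, filterlim f (at_left y) (locally l)).
Proof.
  intros Hxy Hf. split; [|split; exists k].
  - intros t Ht. unfold continuous. rewrite (Hf t Ht).
    apply (filterlim_ext_loc (fun _ => k)); [|apply filterlim_const].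
    apply (filter_imp (fun s => x < s < y)); [intros s Hs; symmetry; auto|].
    now apply locally_open_interval.
  - apply (filterlim_ext_loc (fun _ => k)); [|apply filterlim_const].
    unfold at_right, within.
    apply (filter_imp (fun s => x - 1 < s < y)); [intros s Hs Hxs; symmetry; apply Hf; lra|].
    apply locally_open_interval; lra.
  - apply (filterlim_ext_loc (fun _ => k)); [|apply filterlim_const].
    unfold at_left, within.
    apply (filter_imp (fun s => x < s < y + 1)); [intros s Hs Hsy; symmetry; apply Hf; lra|].
    apply locally_open_interval; lra.
Qed.

Lemma piecewise_continuous_plateau a b c d K m :
  a < c -> c < d -> d < b -> piecewise_continuous (plateau c d K m) a b.
Proof.
  intros Hac Hcd Hdb.
  exists 3%nat, (fun i => match i with 0 => a | 1 => c | 2 => d | _ => b end).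
  split; [reflexivity | split; [reflexivity | split]].
  - intros [|[|[|i]]] Hi; simpl; lra || lia.
  - intros [|[|[|i]]] Hi; [..|lia]; simpl.
    + apply (constant_piece _ _ _ m Hac). intros s Hs. apply plateau_out. lra.
    + apply (constant_piece _ _ _ K Hcd). intros s Hs. apply plateau_in. lra.
    + apply (constant_piece _ _ _ m Hdb). intros s Hs. apply plateau_out. lra.
Qed.

Theorem theorem5 (a b : R) (q1 u : R -> R) :
  a < b ->
  piecewise_continuous q1 a b ->
  solution q1 a b u ->
  u a = 0 -> u b = 0 ->
  (forall t, a < t < b -> u t <> 0) ->
  forall eta : R, 0 < eta < b - a ->
  exists q2 : R -> R,
    piecewise_continuous q2 a b /\
    (exists c d : R,
       a <= c /\ c <= d /\ d <= b /\ d - c <= eta /\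
       (forall t, in_I a b t -> q1 t <= q2 t -> c <= t <= d)) /\
    (forall v : R -> R, solution q2 a b v ->
       exists t, in_I a b t /\ v t = 0).
Proof.
  intros Hab Hq1 _ _ _ _ eta Heta.
  destruct (piecewise_continuous_bounded_below _ _ _ Hq1) as [m Hm].
  set (c := a + (b - a - eta) / 2). set (d := c + eta). set (w := PI / eta).
  assert (Hw : w * (d - c) = PI) by (unfold w, d; field; lra).
  exists (plateau c d (w * w) (m - 1)). split; [|split].
  - apply piecewise_continuous_plateau; unfold d, c; lra.
  - exists c, d. split; [|split; [|split; [|split]]]; try (unfold d, c; lra).
    intros t Ht Hq. specialize (Hm t Ht).
    destruct (Rle_dec c t), (Rle_dec t d); [lra | ..];
      rewrite plateau_out in Hq by lra; lra.
  - intros v [Hv _].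
    destruct (is_solution_on_zero_of_harmonic_piece (plateau c d (w * w) (m - 1))
                a b c d w v) as [z [Hz Hvz]]; unfold d, c in *; try lra.
    + intros t Ht. apply plateau_in, Ht.
    + exact Hv.
    + exists z. split; [unfold in_I; lra | exact Hvz].
Qed.
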